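(* Let $\mathbb{S}\in\mathbb{Z}^{N_X\times N_e}$, $\mathcal{X}=\mathbb{R}^{N_X}_{>0}$, and $\{\Psi^*_x\}_{x\in\mathcal{X}}$ a family of dissipation functions on $\mathbb{R}^{N_e}$ with conjugates $\Psi_x$. Fix $x\in\mathcal{X}$. Let $\tilde{\mathcal{T}}:=\mathrm{Im}\,\mathbb{S}\subset\mathbb{R}^{N_X}$ and $\tilde{\mathcal{T}}^*:=\mathbb{R}^{N_X}/\mathrm{Ker}\,\mathbb{S}^T$, paired by $\langle v,u\rangle$ (well defined since $\mathrm{Im}\,\mathbb{S}\perp\mathrm{Ker}\,\mathbb{S}^T$). For $v\in\tilde{\mathcal{T}}$ let $j^\dagger(x,v)$ be the unique minimizer of $\Psi_x(j)$ over $\{j\in\mathbb{R}^{N_e}:-\mathbb{S}j=v\}$, and define $$\tilde{\Psi}_x(v):=\Psi_x\big(j^\dagger(x,v)\big)\ (v\in\tilde{\mathcal{T}}),\qquad \tilde{\Psi}^*_x(u):=\Psi^*_x\big(-\mathbb{S}^Tu\big)\ (u\in\tilde{\mathcal{T}}^* ).$$ Then $\tilde{\Psi}_x$ and $\tilde{\Psi}^*_x$ are Legendre–Fenchel conjugates of each other, $\tilde{\Psi}_x(v)=\max_{u\in\tilde{\mathcal{T}}^*}[\langle v,u\rangle-\tilde{\Psi}^*_x(u)]$ and $\tilde{\Psi}^*_x(u)=\max_{v\in\tilde{\mathcal{T}}}[\langle v,u\rangle-\tilde{\Psi}_x(v)]$; their Legendre transformations $v\mapsto\partial\tilde{\Psi}_x(v)$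 and $u\mapsto\partial\tilde{\Psi}^*_x(u)$ are mutually inverse bijections between $\tilde{\mathcal{T}}$ and $\tilde{\mathcal{T}}^*$, where $u=\partial\tilde\Psi_x(v)$ is the class with $\nabla\Psi_x(j^\dagger(x,v))=-\mathbb{S}^Tu$ and $\partial\tilde\Psi^*_x(u)=-\mathbb{S}\nabla\Psi^*_x(-\mathbb{S}^Tu)$; and both $\tilde{\Psi}_x$ and $\tilde{\Psi}^*_x$ are dissipation functions (strictly convex, $1$-coercive, symmetric under sign change, and vanishing at $0$). That is, the dissipation functions on the edge spaces induce a dually flat structure on the restricted tangent and cotangent spaces $(\tilde{\mathcal{T}},\tilde{\mathcal{T}}^* )$.
   Context: A dissipation function on $\mathbb{R}^{N_e}$ is a strictly convex, continuously differentiable, $1$-coercive ($\psi(f)/\|f\|\to\infty$ as $\|f\|\to\infty$), even ($\psi(-f)=\psi(f)$) function $\psi$ with $\psi(0)=0$. $\Psi_x(j):=\max_f[\langle j,f\rangle-\Psi^*_x(f)]$ is the Legendre–Fenchel conjugate of $\Psi^*_x$ (also a dissipation function), and $\nabla\Psi_x,\nabla\Psi^*_x$ are mutually inverse bijections of $\mathbb{R}^{N_e}$. $\langle\cdot,\cdot\rangle$ is the standard pairing. *)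

From HB Require Import structures.
From mathcomp Require Import all_boot all_order all_algebra.
From mathcomp Require Import all_classical all_reals all_analysis.
From Stdlib Require Import ClassicalEpsilon.
Set Implicit Arguments. Unset Strict Implicit. Unset Printing Implicit Defensive.
Import Order.TTheory GRing.Theory Num.Theory.
Import numFieldNormedType.Exports.
Local Open Scope classical_set_scope.
Local Open Scope ring_scope.

Section Defs.
Variable R : realType.

Definition dotv n (a b : 'cV[R]_n) : R := \sum_(i < n) a i 0 * b i 0.

(* norm on R^n (max norm of MathComp-Analysis; all norms are equivalent) *)
Definition normv n (a : 'cV[R]_n) : R := `|a|.

Definition SR m n (S : 'M[int]_(m, n)) : 'M[R]_(m, n) := map_mx (fun z => z%:~R) S.

Definition ImS m n (S : 'M[int]_(m, n)) : set 'cV[R]_m :=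
  [set v | exists j : 'cV[R]_n, SR S *m j = v].

(* u ~ u' in R^m / Ker S^T *)
Definition equivT m n (S : 'M[int]_(m, n)) (u u' : 'cV[R]_m) : Prop :=
  (SR S)^T *m u = (SR S)^T *m u'.

Definition qnorm m n (S : 'M[int]_(m, n)) (u : 'cV[R]_m) : R :=
  inf [set r | exists k : 'cV[R]_m, (SR S)^T *m k = 0 /\ r = normv (u + k)].

Definition conj n (psi : 'cV[R]_n -> R) (j : 'cV[R]_n) : R :=
  sup (range (fun f => dotv j f - psi f)).

Definition is_gradient_on n (D : set 'cV[R]_n) (f : 'cV[R]_n -> R)
    (a g : 'cV[R]_n) : Prop :=
  forall eps : R, 0 < eps -> exists del : R, 0 < del /\
    forall h, D h -> normv h < del ->
      `|f (a + h) - f a - dotv g h| <= eps * normv h.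

Definition is_gradient n (f : 'cV[R]_n -> R) (a g : 'cV[R]_n) : Prop :=
  is_gradient_on setT f a g.

Definition continuous_map n (G : 'cV[R]_n -> 'cV[R]_n) : Prop :=
  forall a (eps : R), 0 < eps -> exists del : R, 0 < del /\
    forall b, normv (b - a) < del -> normv (G b - G a) < eps.

Definition strictly_convex_mod n (D : set 'cV[R]_n)
    (E : 'cV[R]_n -> 'cV[R]_n -> Prop) (f : 'cV[R]_n -> R) : Prop :=
  forall a b, D a -> D b -> ~ E a b -> forall t : R, 0 < t < 1 ->
    f (t *: a + (1 - t) *: b) < t * f a + (1 - t) * f b.

Definition coercive_on n (D : set 'cV[R]_n) (nrm : 'cV[R]_n -> R)
    (f : 'cV[R]_n -> R) : Prop :=
  forall M : R, exists r : R, forall z, D z -> r < nrm z -> M < f z / nrm z.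

Definition dissipation n (psi : 'cV[R]_n -> R) : Prop :=
  [/\ strictly_convex_mod setT (@eq _) psi,
      (exists G, continuous_map G /\ forall a, is_gradient psi a (G a)),
      coercive_on setT (@normv n) psi,
      (forall f, psi (- f) = psi f)
    & psi 0 = 0].

Definition is_jdag m n (S : 'M[int]_(m, n)) (psi : 'cV[R]_n -> R)
    (v : 'cV[R]_m) (j : 'cV[R]_n) : Prop :=
  - (SR S *m j) = v /\ forall j', - (SR S *m j') = v -> psi j <= psi j'.

(* j^dagger(x,v): the (unique, cf. the theorem) minimizer, chosen by epsilon *)
Definition jdag m n (S : 'M[int]_(m, n)) (psi : 'cV[R]_n -> R)
    (v : 'cV[R]_m) : 'cV[R]_n :=
  epsilon (inhabits 0) (is_jdag S psi v).

Definition tPsi m n (S : 'M[int]_(m, n)) (Psistar : 'cV[R]_n -> R)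
    (v : 'cV[R]_m) : R :=
  conj Psistar (jdag S (conj Psistar) v).

(* tilde Psi*_x (u) := Psi*_x (- S^T u)  (on representatives u of R^m/Ker S^T) *)
Definition tPsistar m n (S : 'M[int]_(m, n)) (Psistar : 'cV[R]_n -> R)
    (u : 'cV[R]_m) : R :=
  Psistar (- ((SR S)^T *m u)).

Definition dtPsistar m n (S : 'M[int]_(m, n)) (gradPsistar : 'cV[R]_n -> 'cV[R]_n)
    (u : 'cV[R]_m) : 'cV[R]_m :=
  - (SR S *m gradPsistar (- ((SR S)^T *m u))).

Definition is_dtPsi m n (S : 'M[int]_(m, n)) (Psistar : 'cV[R]_n -> R)
    (v u : 'cV[R]_m) : Prop :=
  is_gradient (conj Psistar) (jdag S (conj Psistar) v) (- ((SR S)^T *m u)).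

End Defs.

From HB Require Import structures.
From mathcomp Require Import all_boot all_order all_algebra.
From mathcomp Require Import all_classical all_reals all_analysis.
From mathcomp Require Import ring lra.
From Stdlib Require Import ClassicalEpsilon.
Set Implicit Arguments. Unset Strict Implicit. Unset Printing Implicit Defensive.
Import Order.TTheory GRing.Theory Num.Theory.
Import numFieldNormedType.Exports.
Local Open Scope classical_set_scope.
Local Open Scope ring_scope.

(* Write A for S as a real matrix and g for the gradient of Psi*_x. The
   gradient g is a bijection: minimizing the coercive strictly convex function
   Psi*_x - <j, .> shows it is onto. Hence Psi_x (g a) = <g a, a> - Psi*_x a,
   Fenchel-Young is strict off the graph of g, Psi_x is strictly convex, and
   its gradient at g a is a (the Bregman divergence of Psi*_x grows linearly,
   which keeps the maximizers of <g a + h, .> - Psi*_x close to a).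
   For v = A j in Im S, a critical point u of Psi*_x (- A^T u) - <j, A^T u>
   satisfies v = - A g (- A^T u). By Fenchel-Young, j = g (- A^T u) then
   minimizes Psi_x on {- A j = v}, and tilde Psi_x (v) = <v, u> - tilde Psi*_x (u).
   Conjugacy, the Legendre maps and the dissipation properties of the reduced
   pair all follow from this identity and the corresponding facts for
   (Psi_x, Psi*_x), transported by - A and - A^T. *)

Ltac vec_ring := apply/matrixP => ? ?; rewrite !mxE; ring.

Section Pairing.
Variable R : realType.
Local Notation V n := 'cV[R]_n.

Lemma dotvE n (a b : V n) : dotv a b = (a^T *m b) 0 0.
Proof. by rewrite /dotv !mxE; apply: eq_bigr => i _; rewrite mxE. Qed.

Lemma dotvC n (a b : V n) : dotv a b = dotv b a.
Proof. by rewrite /dotv; apply: eq_bigr => i _; rewrite mulrC. Qed.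

Lemma dotvDl n (a b c : V n) : dotv (a + b) c = dotv a c + dotv b c.
Proof. by rewrite /dotv -big_split; apply: eq_bigr => i _; rewrite mxE mulrDl. Qed.

Lemma dotvDr n (a b c : V n) : dotv c (a + b) = dotv c a + dotv c b.
Proof. by rewrite dotvC dotvDl !(dotvC c). Qed.

Lemma dotvZl n s (a b : V n) : dotv (s *: a) b = s * dotv a b.
Proof. by rewrite /dotv mulr_sumr; apply: eq_bigr => i _; rewrite mxE mulrA. Qed.

Lemma dotvZr n s (a b : V n) : dotv a (s *: b) = s * dotv a b.
Proof. by rewrite dotvC dotvZl dotvC. Qed.

Lemma dotvNl n (a b : V n) : dotv (- a) b = - dotv a b.
Proof. by rewrite -scaleN1r dotvZl mulN1r. Qed.

Lemma dotvNr n (a b : V n) : dotv a (- b) = - dotv a b.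
Proof. by rewrite dotvC dotvNl dotvC. Qed.

Lemma dotvBl n (a b c : V n) : dotv (a - b) c = dotv a c - dotv b c.
Proof. by rewrite dotvDl dotvNl. Qed.

Lemma dotvBr n (a b c : V n) : dotv c (a - b) = dotv c a - dotv c b.
Proof. by rewrite dotvDr dotvNr. Qed.

Lemma dotv0l n (a : V n) : dotv 0 a = 0.
Proof. by rewrite -(scale0r a) dotvZl mul0r. Qed.

Lemma dotv0r n (a : V n) : dotv a 0 = 0.
Proof. by rewrite dotvC dotv0l. Qed.

Lemma dotv_mulmxl m n (M : 'M[R]_(m, n)) (a : V n) (b : V m) :
  dotv (M *m a) b = dotv a (M^T *m b).
Proof. by rewrite !dotvE trmx_mul mulmxA. Qed.

Lemma dotv_delta n (a : V n) i : dotv a (delta_mx i 0) = a i 0.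
Proof.
rewrite /dotv (bigD1 i) //= big1 ?addr0; first by rewrite mxE !eqxx mulr1.
by move=> k /negbTE ki; rewrite mxE ki mulr0.
Qed.

Lemma dotv_nondegenerate n (d : V n) : (forall w, dotv d w = 0) -> d = 0.
Proof. by move=> d0; apply/matrixP => i j; rewrite (ord1 j) mxE -dotv_delta d0. Qed.

Lemma normv_ge0 n (a : V n) : 0 <= normv a.
Proof. exact: normr_ge0. Qed.

Lemma normvD n (a b : V n) : normv (a + b) <= normv a + normv b.
Proof. exact: ler_normD. Qed.

Lemma normvN n (a : V n) : normv (- a) = normv a.
Proof. exact: normrN. Qed.

Lemma normvZ n s (a : V n) : normv (s *: a) = `|s| * normv a.
Proof. exact: normrZ. Qed.

Lemma normv0 n : normv (0 : V n) = 0.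
Proof. exact: normr0. Qed.

Lemma normv_entry n (a : V n) i : `|a i 0| <= normv a.
Proof.
rewrite /normv (_ : `|a| = mx_norm a) // mx_normrE.
by apply/bigmax_geP; right => /=; exists (i, 0).
Qed.

Lemma normv_le n (a : V n) c : 0 <= c -> (forall i, `|a i 0| <= c) -> normv a <= c.
Proof.
move=> c0 ac; rewrite /normv (_ : `|a| = mx_norm a) // mx_normrE.
by apply/bigmax_leP; split => // -[i j] _ /=; rewrite (ord1 j).
Qed.

Lemma dotv_le n (a b : V n) : `|dotv a b| <= n.+1%:R * normv a * normv b.
Proof.
rewrite /dotv; apply: le_trans (ler_norm_sum _ _ _) _.
apply: le_trans (_ : \sum_(i < n) (normv a * normv b) <= _).
  by apply: ler_sum => i _; rewrite normrM ler_pM ?normv_entry.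
by rewrite sumr_const card_ord -mulrA mulr_natl mulrSr lerDl mulr_ge0 ?normv_ge0.
Qed.

Definition mx_abs_sum m n (M : 'M[R]_(m, n)) : R := \sum_i \sum_j `|M i j|.

Lemma mx_abs_sum_ge0 m n (M : 'M[R]_(m, n)) : 0 <= mx_abs_sum M.
Proof. by apply: sumr_ge0 => i _; apply: sumr_ge0. Qed.

Lemma normv_mulmx m n (M : 'M[R]_(m, n)) (a : V n) :
  normv (M *m a) <= mx_abs_sum M * normv a.
Proof.
apply: normv_le => [|i]; first by rewrite mulr_ge0 ?mx_abs_sum_ge0 ?normv_ge0.
rewrite mxE; apply: le_trans (ler_norm_sum _ _ _) _.
apply: le_trans (_ : \sum_j `|M i j| * normv a <= _).
  by apply: ler_sum => j _; rewrite normrM ler_wpM2l ?normv_entry.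
rewrite -mulr_suml ler_wpM2r ?normv_ge0 // /mx_abs_sum (bigD1 i) //= lerDl.
by apply: sumr_ge0 => k _; apply: sumr_ge0.
Qed.

End Pairing.

Section Calculus.
Variable R : realType.
Local Notation V n := 'cV[R]_n.

Definition vcontinuous n (f : V n -> R) : Prop :=
  forall a e, 0 < e -> exists del, 0 < del /\
    forall b, normv (b - a) < del -> `|f b - f a| < e.

Definition vclosed n (A : set (V n)) : Prop :=
  forall z, (forall e, 0 < e -> exists y, A y /\ normv (y - z) < e) -> A z.

Lemma mx_norm_trmx p q (M : 'M[R]_(p, q)) : `|M^T| = `|M|.
Proof.
have le_tr p' q' (N : 'M[R]_(p', q')) : mx_norm N^T <= mx_norm N.
  rewrite [X in X <= _]mx_normrE; apply/bigmax_leP; split => [|[i j] _ /=].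
    exact: (normr_ge0 N).
  by rewrite mxE mx_normrE; apply/bigmax_geP; right; exists (j, i).
rewrite (_ : `|M^T| = mx_norm M^T) // (_ : `|M| = mx_norm M) //.
apply/eqP; rewrite eq_le; apply/andP; split; first exact: le_tr.
by have := le_tr _ _ M^T; rewrite trmxK.
Qed.

(* Compactness is only available for row vectors, hence the transposition. *)
Lemma vcontinuous_min n (f : V n -> R) (A : set (V n)) :
  A !=set0 -> (exists M, forall z, A z -> normv z <= M) -> vclosed A ->
  vcontinuous f -> exists c, A c /\ forall z, A z -> f c <= f z.
Proof.
move=> [z0 Az0] [M AM] Acl fc.
have normv_tr (r s : 'rV[R]_n) : normv (r^T - s^T) = `|s - r|.
  by rewrite /normv -linearB mx_norm_trmx -normrN opprB.
pose A' := [set r : 'rV[R]_n | A r^T].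
have A'0 : A' !=set0 by exists z0^T; rewrite /A' /= trmxK.
have cA' : compact A'.
  apply: bounded_closed_compact.
    exists M; split; first by rewrite num_real.
    move=> N MN r /= Ar; rewrite -mx_norm_trmx; exact: le_trans (AM _ Ar) (ltW MN).
  move=> p /= Ap; apply: Acl => e e0.
  have [y [Ay pey]] := Ap _ (nbhsx_ballx p e e0).
  by exists y^T; split => //; rewrite normv_tr; move: pey; rewrite -ball_normE.
have cf : {within A', continuous (fun r => f r^T)}.
  apply: continuous_subspaceT => r; apply/(@cvgrPdist_lt _ _ _ (nbhs r)) => e e0.
  have [del [del0 fdel]] := fc r^T e e0.
  apply/nbhs_ballP; exists del => //= y ry.
  by rewrite distrC; apply: fdel; rewrite normv_tr; move: ry; rewrite -ball_normE.
have [c cA cmin] := compact_EVT_min A'0 cA' cf.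
exists c^T; split; first by move: cA; rewrite inE.
by move=> z Az; have := cmin z^T; rewrite trmxK; apply; rewrite inE /A' /= trmxK.
Qed.

Lemma vclosed_sublevel n (f : V n -> R) c :
  vcontinuous f -> vclosed [set z | f z <= c].
Proof.
move=> fc z zcl /=; rewrite leNgt; apply/negP => cfz.
have [del [del0 fdel]] := fc z (f z - c) ltac:(by rewrite subr_gt0).
have [y [/= fyc yz]] := zcl del del0.
by have := fdel y yz; rewrite ltr_norml => /andP[+ _]; lra.
Qed.

Lemma vclosed_level n (f : V n -> R) c :
  vcontinuous f -> vclosed [set z | f z = c].
Proof.
move=> fc z zcl /=; apply/eqP; rewrite -subr_eq0 -normr_le0; apply/negPn/negP.
rewrite -ltNge => fzc.
have [del [del0 fdel]] := fc z _ fzc.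
have [y [/= fyc yz]] := zcl del del0.
by have := fdel y yz; rewrite fyc distrC ltxx.
Qed.

Lemma vcontinuous_normv_sub n (a : V n) : vcontinuous (fun p => normv (p - a)).
Proof.
move=> b e e0; exists e; split => // p pb.
by apply: le_lt_trans (ler_dist_dist _ _) _; rewrite opprB addrA subrK.
Qed.

Lemma vcontinuous_mulmx m n (k : V n -> R) (M : 'M[R]_(n, m)) :
  vcontinuous k -> vcontinuous (fun u => k (M *m u)).
Proof.
move=> kc a e e0; have [del [del0 kdel]] := kc (M *m a) e e0.
have cM0 := mx_abs_sum_ge0 M.
exists (del / (mx_abs_sum M + 1)); split; first by rewrite divr_gt0 // ltr_wpDl.
move=> b; rewrite ltr_pdivlMr ?ltr_wpDl // => bdel; apply: kdel.
rewrite -mulmxBr; apply: le_lt_trans (normv_mulmx _ _) _.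
by have := normv_ge0 (b - a); nra.
Qed.

(* Far out [k] exceeds [k 0]; nearby, [pinvmx M] pulls the range of [M] back
   to a bounded set of preimages, where the minimum exists. *)
Lemma vcontinuous_min_range m n (M : 'M[R]_(n, m)) (k : V n -> R) :
  vcontinuous k -> (exists r, forall w, r < normv w -> k 0 < k w) ->
  exists u0, forall u, k (M *m u0) <= k (M *m u).
Proof.
move=> kc [r kr].
set r' := Num.max r 0; set K := mx_abs_sum (pinvmx M) * r'.
have r'0 : 0 <= r' by rewrite le_max lexx orbT.
have ball_cl : vclosed [set u : V m | normv u <= K].
  apply: vclosed_sublevel => u e /(vcontinuous_normv_sub 0 u) [del [del0 hdel]].
  by exists del; split => // b /hdel; rewrite !subr0.
have [||c [cK cmin]] := vcontinuous_min _ _ ball_cl (vcontinuous_mulmx M kc).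
- by exists 0; rewrite /= normv0 mulr_ge0 ?mx_abs_sum_ge0.
- by exists K.
exists c => u; have [Mur|Mur] := leP (normv (M *m u)) r'.
  have BMu : normv (pinvmx M *m (M *m u)) <= K.
    by apply: le_trans (normv_mulmx _ _) _; rewrite ler_wpM2l ?mx_abs_sum_ge0.
  have := cmin _ BMu; cbv beta.
  by rewrite (mulmxA M) (mulmxA (M *m _) M) mulmxKpV ?submx_refl.
apply: le_trans (ltW (kr _ _)); last by apply: le_lt_trans Mur; rewrite le_max lexx.
by have := cmin 0; rewrite mulmx0 /= normv0 mulr_ge0 ?mx_abs_sum_ge0 //; apply.
Qed.

End Calculus.

Section Gradient.
Variable R : realType.
Local Notation V n := 'cV[R]_n.

Lemma ler_add_epsM (x y c : R) : 0 <= c -> (forall e, 0 < e -> x <= y + e * c) -> x <= y.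
Proof.
move=> c0 xy; apply/ler_addgt0Pr => e e0.
have c1 : 0 < c + 1 by lra.
apply: le_trans (xy (e / (c + 1)) (divr_gt0 e0 c1)) _.
by rewrite lerD2l mulrAC ler_pdivrMr //; nra.
Qed.

Lemma is_gradient_continuous n (k : V n -> R) :
  (forall a, exists G, is_gradient k a G) -> vcontinuous k.
Proof.
move=> kG a e e0; have [G aG] := kG a.
have [del1 [del10 kdel]] := aG 1 ltr01.
set K := n.+1%:R * normv G + 1.
have K0 : 0 < K by rewrite /K ltr_wpDl ?mulr_ge0 ?normv_ge0.
exists (Num.min del1 (e / K)); split; first by rewrite lt_min del10 divr_gt0.
move=> b; rewrite lt_min => /andP[bdel1 bK].
have := kdel (b - a) I bdel1; rewrite [a + _]addrC subrK mul1r => kab.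
have := dotv_le G (b - a); have := normv_ge0 (b - a).
move: bK; rewrite ltr_pdivlMr // /K.
have : `|k b - k a| <= `|k b - k a - dotv G (b - a)| + `|dotv G (b - a)|.
  by rewrite -[X in `|X| <= _](subrK (dotv G (b - a))) ler_normD.
lra.
Qed.

(* Test the two gradients on the coordinate directions. *)
Lemma is_gradient_uniq n (k : V n -> R) a G1 G2 :
  is_gradient k a G1 -> is_gradient k a G2 -> G1 = G2.
Proof.
move=> kG1 kG2; apply/eqP; rewrite -subr_eq0; apply/eqP/matrixP => i j.
rewrite (ord1 j) [RHS]mxE; apply/eqP; rewrite -normr_le0.
apply: (@ler_add_epsM _ _ 2) => // e e0; rewrite add0r.
have [d1 [d10 kd1]] := kG1 e e0; have [d2 [d20 kd2]] := kG2 e e0.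
set t := Num.min d1 d2 / 2.
have t0 : 0 < t by rewrite divr_gt0 // lt_min d10.
have td : t < Num.min d1 d2.
  by rewrite /t ltr_pdivrMr // mulr_natr mulr2n ltrDr lt_min d10.
set h := t *: (delta_mx i 0 : V n).
have nh : normv h <= t.
  rewrite /h normvZ (ger0_norm (ltW t0)) ler_piMr ?(ltW t0) //.
  by apply: normv_le => // k0; rewrite mxE; case: (_ && _); rewrite ?normr1 ?normr0.
have := le_lt_trans nh td; rewrite lt_min => /andP[nh1 nh2].
have hG : dotv G1 h - dotv G2 h = t * (G1 - G2) i 0.
  by rewrite -dotvBl dotvZr dotv_delta.
set z := (G1 - G2) i 0 in hG *.
have := kd1 h I nh1; have := kd2 h I nh2; set u := k (a + h) - k a => u2 u1.
have : `|t * z| <= e * normv h + e * normv h.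
  rewrite -hG (_ : dotv G1 h - dotv G2 h = (u - dotv G2 h) - (u - dotv G1 h)); last by ring.
  exact: le_trans (ler_normB _ _) (lerD _ _).
rewrite normrM (ger0_norm (ltW t0)) => tz.
rewrite -(ler_pM2l t0); nra.
Qed.

Lemma is_gradient_min_dir n (k : V n -> R) a G (w : V n) : is_gradient k a G ->
  (forall t, 0 < t -> k a <= k (a + t *: w)) -> 0 <= dotv G w.
Proof.
move=> aG amin; set N := normv w.
have N0 : 0 <= N by apply: normv_ge0.
apply: (ler_add_epsM N0) => e e0.
have [del [del0 kdel]] := aG e e0.
pose t := del / (N + 1).
have t0 : 0 < t by rewrite /t divr_gt0 //; lra.
have tN : t * (N + 1) = del by rewrite /t mulfVK // gt_eqF //; lra.
have nh : normv (t *: w) = t * N by rewrite normvZ ger0_norm // ltW.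
have := kdel (t *: w) I; rewrite nh => /(_ ltac:(nra)).
rewrite dotvZr ler_norml => /andP[k1 k2].
have := amin t t0; nra.
Qed.

Lemma is_gradient_along n p (k : V n -> R) f G (L : 'M[R]_(n, p)) : is_gradient k f G ->
  forall eps, 0 < eps -> exists del, 0 < del /\ forall h : V p, normv h < del ->
    `|k (f + L *m h) - k f - dotv G (L *m h)| <= eps * normv h.
Proof.
move=> fG eps e0.
have cL := mx_abs_sum_ge0 L.
have c0 : 0 < mx_abs_sum L + 1 by lra.
have [del [del0 kdel]] := fG (eps / (mx_abs_sum L + 1)) (divr_gt0 e0 c0).
exists (del / (mx_abs_sum L + 1)); split; first by rewrite divr_gt0.
move=> h; rewrite ltr_pdivlMr // => hdel.
have nL := normv_mulmx L h; have hn := normv_ge0 h.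
have nLh : normv (L *m h) <= (mx_abs_sum L + 1) * normv h by nra.
apply: le_trans (kdel (L *m h) I _) _; first by apply: le_lt_trans nLh _; lra.
apply: le_trans (ler_wpM2l _ nLh) _; first by rewrite divr_ge0 ?ltW.
by rewrite mulrA divfK ?lt0r_neq0.
Qed.

End Gradient.

Section Dissipation.
Variables (R : realType) (n : nat).
Local Notation V := 'cV[R]_n.
Variables (phi : V -> R) (g : V -> V).
Hypothesis phi_sconvex : strictly_convex_mod setT (@eq _) phi.
Hypothesis phi_grad : forall a, is_gradient phi a (g a).
Hypothesis phi_coercive : coercive_on setT (@normv R n) phi.
Hypothesis phiN : forall f, phi (- f) = phi f.
Hypothesis phi0 : phi 0 = 0.

Lemma phi_convex a b t : 0 <= t <= 1 ->
  phi (t *: b + (1 - t) *: a) <= t * phi b + (1 - t) * phi a.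
Proof.
move=> /andP[t0 t1].
have [->|tn0] := eqVneq t 0; first by rewrite scale0r add0r subr0 scale1r; lra.
have [->|tn1] := eqVneq t 1; first by rewrite scale1r subrr scale0r addr0; lra.
have [->|ab] := eqVneq a b.
  by rewrite -scalerDl subrKC scale1r; lra.
apply/ltW/phi_sconvex => //; first by move=> ba; rewrite ba eqxx in ab.
by rewrite !lt_def tn0 t0 t1 eq_sym tn1.
Qed.

Lemma phi_subgradient a b : phi a + dotv (g a) (b - a) <= phi b.
Proof.
set d := b - a; set N := normv d.
have N0 : 0 <= N by apply: normv_ge0.
apply: (ler_add_epsM N0) => e e0.
have [del [del0 phidel]] := phi_grad a e0.
pose t := del / (del + N + 1).
have K0 : 0 < del + N + 1 by lra.
have tK : t * (del + N + 1) = del by rewrite /t mulfVK // gt_eqF.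
have t0 : 0 < t by rewrite /t divr_gt0.
have t1 : t < 1 by nra.
have tN : t * N < del by nra.
have := phidel (t *: d) I; rewrite normvZ ger0_norm ?(ltW t0) // => /(_ tN).
have -> : a + t *: d = t *: b + (1 - t) *: a by rewrite /d; vec_ring.
have := phi_convex a b (t := t); rewrite ltW //= ltW // => /(_ isT).
rewrite dotvZr -/N ler_norml => conv /andP[lo hi]; nra.
Qed.

Lemma phi_subgradient_strict a b : a != b -> phi a + dotv (g a) (b - a) < phi b.
Proof.
move=> ab; set m := (1/2) *: b + (1 - 1/2) *: a.
have phim : phi m < 1/2 * phi b + (1 - 1/2) * phi a.
  by apply: phi_sconvex => //; [move=> ba; rewrite ba eqxx in ab | lra].
have := phi_subgradient a m.
have -> : m - a = (1/2) *: (b - a) by rewrite /m; vec_ring.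
rewrite dotvZr; lra.
Qed.

Lemma phi_ge0 f : 0 <= phi f.
Proof.
have := phi_subgradient 0 f; have := phi_subgradient 0 (- f).
rewrite phiN phi0 !subr0 dotvNr; lra.
Qed.

Lemma is_gradient_add_dotv (c : V) a :
  is_gradient (fun f => phi f + dotv c f) a (g a + c).
Proof.
move=> e e0; have [del [del0 phidel]] := phi_grad a e0.
exists del; split => // h Dh hdel; have := phidel h Dh hdel.
by rewrite dotvDl dotvDr (_ : _ + _ - _ - _ = phi (a + h) - phi a - dotv (g a) h) //; ring.
Qed.

Lemma add_dotv_coercive (c : V) : exists r, forall w, r < normv w ->
  phi 0 + dotv c 0 < phi w + dotv c w.
Proof.
have [r phir] := phi_coercive (n.+1%:R * normv c + 1).
exists (Num.max r 0) => w; rewrite gt_max => /andP[rw w0].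
have := phir w I rw; rewrite ltr_pdivlMr // => phiw.
have := dotv_le c w; rewrite phi0 dotv0r ler_norml => /andP[cw _].
lra.
Qed.

(* A minimizer of [phi + <c, .>] on the range of [M] is a critical point there. *)
Lemma exists_critical_range (c : V) m (M : 'M[R]_(n, m)) :
  exists u0, forall u, dotv (g (M *m u0) + c) (M *m u) = 0.
Proof.
have phic := is_gradient_add_dotv c.
have [u0 u0min] := vcontinuous_min_range M
  (is_gradient_continuous (fun a => ex_intro _ _ (phic a))) (add_dotv_coercive c).
have dir_ge0 u : 0 <= dotv (g (M *m u0) + c) (M *m u).
  apply: (is_gradient_min_dir (phic _)) => t t0.
  by rewrite /= scalemxAr -mulmxDr; apply: u0min.
exists u0 => u; apply/eqP; rewrite eq_le dir_ge0 andbT.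
by have := dir_ge0 (- u); rewrite mulmxN dotvNr oppr_ge0.
Qed.

Lemma grad_surj j : exists a, g a = j.
Proof.
have [a ja] := exists_critical_range (- j) (1%:M : 'M[R]_n).
exists a; apply/eqP; rewrite -subr_eq0; apply/eqP/dotv_nondegenerate => w.
by have := ja w; rewrite !mul1mx.
Qed.

Lemma fenchel_young j f : dotv j f - phi f <= conj phi j.
Proof.
have [a <-] := grad_surj j.
apply: ub_le_sup; last by exists f.
exists (dotv (g a) a - phi a) => _ [f' _ <-].
by have := phi_subgradient a f'; rewrite dotvBr; lra.
Qed.

Lemma conj_at_grad a : conj phi (g a) = dotv (g a) a - phi a.
Proof.
apply/eqP; rewrite eq_le fenchel_young andbT.
apply: ge_sup => [|_ [f _ <-]]; first by exists (dotv (g a) 0 - phi 0), 0.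
by have := phi_subgradient a f; rewrite dotvBr; lra.
Qed.

Lemma fenchel_young_strict a f : f != a -> dotv (g a) f - phi f < conj phi (g a).
Proof.
move=> fa; have := phi_subgradient_strict (a := a) (b := f).
by rewrite conj_at_grad eq_sym fa dotvBr => /(_ isT); lra.
Qed.

Lemma conj_ge0 j : 0 <= conj phi j.
Proof. by have := fenchel_young j 0; rewrite dotv0r phi0 subr0. Qed.

Lemma conj0 : conj phi 0 = 0.
Proof.
have [a a0] := grad_surj 0; apply/eqP; rewrite eq_le conj_ge0 andbT.
by rewrite -a0 conj_at_grad a0 dotv0l sub0r oppr_le0 phi_ge0.
Qed.

Lemma conjN j : conj phi (- j) = conj phi j.
Proof.
suff le_conjN j' : conj phi (- j') <= conj phi j'.
  apply/eqP; rewrite eq_le; apply/andP; split; first exact: le_conjN.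
  by have := le_conjN (- j); rewrite opprK.
have [a ga] := grad_surj (- j').
by rewrite -ga conj_at_grad ga dotvNl; have := fenchel_young j' (- a); rewrite dotvNr phiN.
Qed.

Lemma conj_strictly_convex j1 j2 t : j1 != j2 -> 0 < t < 1 ->
  conj phi (t *: j1 + (1 - t) *: j2) < t * conj phi j1 + (1 - t) * conj phi j2.
Proof.
move=> j12 /andP[t0 t1].
have [a ga] := grad_surj (t *: j1 + (1 - t) *: j2).
have [a1 g1] := grad_surj j1; have [a2 g2] := grad_surj j2.
rewrite -ga conj_at_grad ga dotvDl !dotvZl.
have := fenchel_young j1 a; have := fenchel_young j2 a.
have [aa1|aa1] := eqVneq a a1.
  have aa2 : a != a2 by apply: contra_neq j12 => aa2; rewrite -g1 -g2 -aa1 aa2.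
  by have := fenchel_young_strict aa2; rewrite g2; nra.
by have := fenchel_young_strict aa1; rewrite g1; nra.
Qed.

(* Test [j] against the vectors [+- r e_i] along its largest coordinate. *)
Lemma conj_lower_bound r : 0 <= r ->
  exists K, 0 <= K /\ forall j, r * normv j - K <= conj phi j.
Proof.
move=> r0; pose e i : V := r *: delta_mx i 0.
have K0 : 0 <= \sum_i phi (e i) by apply: sumr_ge0 => i _; apply: phi_ge0.
exists (\sum_i phi (e i)); split => // j.
have [j0|j0] := eqVneq (normv j) 0.
  by rewrite j0 mulr0 sub0r; apply: le_trans (conj_ge0 j); rewrite oppr_le0.
have [[i k] /= ji] := @mx_norm_neq0 _ _ _ j j0; rewrite (ord1 k) in ji.
have nj : normv j = `|j i 0| by [].
have Ki : phi (e i) <= \sum_i phi (e i).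
  by rewrite (bigD1 i) //= lerDl; apply: sumr_ge0 => k' _; apply: phi_ge0.
have [ji0|ji0] := leP 0 (j i 0).
  have := fenchel_young j (e i); rewrite dotvZr dotv_delta.
  by rewrite nj ger0_norm //; nra.
have := fenchel_young j (- e i); rewrite phiN dotvNr dotvZr dotv_delta.
by rewrite nj ltr0_norm //; nra.
Qed.

Definition bregman a b := phi b - phi a - dotv (g a) (b - a).

Lemma bregman_ge0 a b : 0 <= bregman a b.
Proof. by have := phi_subgradient a b; rewrite /bregman; lra. Qed.

Lemma bregman_convex a f s : 0 <= s <= 1 ->
  bregman a (s *: f + (1 - s) *: a) <= s * bregman a f.
Proof.
move=> s01; have := phi_convex a f s01.
rewrite /bregman (_ : s *: f + (1 - s) *: a - a = s *: (f - a)); last by vec_ring.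
by rewrite dotvZr; lra.
Qed.

Lemma bregman_sphere_gap a r : 0 < r ->
  exists2 m, 0 < m & forall p, normv (p - a) = r -> m <= bregman a p.
Proof.
move=> r0.
have [[p0 p0r]|nosphere] := pselect (exists p, normv (p - a) = r); last first.
  by exists 1 => // p pr; exfalso; apply: nosphere; exists p.
have breg_cont : vcontinuous (bregman a).
  apply: is_gradient_continuous => p; exists (g p - g a) => e e0.
  have [del [del0 pdel]] := phi_grad p e0; exists del; split => // h Dh hdel.
  have -> : bregman a (p + h) - bregman a p - dotv (g p - g a) h =
            phi (p + h) - phi p - dotv (g p) h.
    by rewrite /bregman !dotvBr dotvDr dotvBl; ring.
  exact: pdel.
have [||c [/= cr cmin]] :=
  vcontinuous_min _ _ (vclosed_level (c := r) (vcontinuous_normv_sub a)) breg_cont.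
- by exists p0.
- exists (r + normv a) => z /= <-.
  by have := normvD (z - a) a; rewrite subrK.
exists (bregman a c) => //.
have ac : a != c by apply: contraTneq r0 => ac; rewrite -cr -ac subrr normv0 ltxx.
by have := phi_subgradient_strict ac; rewrite /bregman; lra.
Qed.

Lemma bregman_growth a r m : 0 < r ->
  (forall p, normv (p - a) = r -> m <= bregman a p) ->
  forall f, r <= normv (f - a) -> m * normv (f - a) <= r * bregman a f.
Proof.
move=> r0 gap f rf; set N := normv (f - a).
have N0 : 0 < N := lt_le_trans r0 rf.
set s := r / N.
have sN : s * N = r by rewrite /s mulfVK // gt_eqF.
have s0 : 0 < s by rewrite divr_gt0.
have s1 : s <= 1 by rewrite /s ler_pdivrMr // mul1r.
have := gap (s *: f + (1 - s) *: a).
rewrite (_ : s *: f + (1 - s) *: a - a = s *: (f - a)); last by vec_ring.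
rewrite normvZ ger0_norm ?(ltW s0) // -/N sN => /(_ erefl) gap_s.
have := bregman_convex a f (s := s); rewrite (ltW s0) s1 => /(_ isT) conv.
have : m <= s * bregman a f by lra.
by move=> /(ler_wpM2r (ltW N0)); rewrite mulrAC sN mulrC.
Qed.

(* The maximizer [a'] of [<g a + h, .> - phi] stays close to [a] because the
   Bregman divergence grows linearly away from [a]. *)
Lemma is_gradient_conj a : is_gradient (conj phi) (g a) a.
Proof.
move=> e e0; set r := e / n.+1%:R.
have r0 : 0 < r by rewrite divr_gt0.
have rn : r * n.+1%:R = e by rewrite /r mulfVK.
have [m m0 gap] := bregman_sphere_gap a r0.
exists (m / e); split; first by rewrite divr_gt0.
move=> h _; rewrite ltr_pdivlMr // => hm.
have [a' ga'] := grad_surj (g a + h).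
set D := conj phi (g a + h) - conj phi (g a) - dotv a h.
have D0 : 0 <= D.
  by have := fenchel_young (g a + h) a; rewrite /D conj_at_grad dotvDl (dotvC h a); lra.
have DE : D = dotv h (a' - a) - bregman a a'.
  by rewrite /D -ga' !conj_at_grad ga' /bregman !dotvBr dotvDl (dotvC a h); ring.
have := dotv_le h (a' - a); rewrite ler_norml => /andP[_ hb].
have B_le : bregman a a' <= n.+1%:R * normv h * normv (a' - a) by lra.
have close : normv (a' - a) < r.
  rewrite ltNge; apply/negP => ra'.
  have N'0 := lt_le_trans r0 ra'.
  have := le_trans (bregman_growth r0 gap ra') (ler_wpM2l (ltW r0) B_le).
  rewrite -rn in hm; nra.
have := bregman_ge0 a a'; have := mulr_ge0 (ler0n R n.+1) (normv_ge0 h).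
rewrite ger0_norm // -rn; nra.
Qed.

Lemma grad_conj_inv j f : is_gradient (conj phi) j f -> g f = j.
Proof.
move=> jf; have [a ga] := grad_surj j.
by move: jf; rewrite -ga => /is_gradient_uniq/(_ (is_gradient_conj a)) ->.
Qed.

Section Reduction.
Variables (NX : nat) (S : 'M[int]_(NX, n)).
Local Notation A := (@SR R _ _ S).
Local Notation T := (@ImS R _ _ S).
Local Notation mSt u := (- (A^T *m u)).

Lemma dotv_mSt (j : V) u : dotv j (mSt u) = dotv (- (A *m j)) u.
Proof. by rewrite dotvNr dotvNl dotv_mulmxl. Qed.

Lemma opp_mulmx_comb t (j1 j2 : V) : - (A *m (t *: j1 + (1 - t) *: j2)) =
  t *: (- (A *m j1)) + (1 - t) *: (- (A *m j2)).
Proof. by rewrite mulmxDr -!scalemxAr; vec_ring. Qed.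

Lemma ImSD v w : T v -> T w -> T (v + w).
Proof. by move=> [j <-] [k <-]; exists (j + k); rewrite mulmxDr. Qed.

Lemma ImSN v : T v -> T (- v).
Proof. by move=> [j <-]; exists (- j); rewrite mulmxN. Qed.

Lemma ImSZ s v : T v -> T (s *: v).
Proof. by move=> [j <-]; exists (s *: j); rewrite scalemxAr. Qed.

Lemma ImS_dtPsistar u : T (dtPsistar S g u).
Proof. by apply: ImSN; exists (g (mSt u)). Qed.

Lemma dtPsistar_onto v : T v -> exists u, dtPsistar S g u = v.
Proof.
move=> [j <-]; have [u0 u0crit] := exists_critical_range j (- A^T).
exists u0; rewrite /dtPsistar.
have : A *m (g (mSt u0) + j) = 0.
  apply: dotv_nondegenerate => u; rewrite dotv_mulmxl.
  by have := u0crit (- u); rewrite !mulNmx mulmxN opprK.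
by rewrite mulmxDr => /eqP; rewrite addr_eq0 => /eqP ->; rewrite opprK.
Qed.

Lemma is_jdag_dtPsistar u : is_jdag S (conj phi) (dtPsistar S g u) (g (mSt u)).
Proof.
split => // j' j'u; have := fenchel_young j' (mSt u).
by rewrite conj_at_grad !dotv_mSt j'u.
Qed.

Lemma is_jdag_uniq v j1 j2 :
  is_jdag S (conj phi) v j1 -> is_jdag S (conj phi) v j2 -> j1 = j2.
Proof.
move=> [e1 m1] [e2 m2]; apply/eqP/negPn/negP => j12.
set m := (1/2) *: j1 + (1 - 1/2) *: j2.
have em : - (A *m m) = v.
  by rewrite /m opp_mulmx_comb e1 e2 -scalerDl subrKC scale1r.
have := conj_strictly_convex j12 (t := 1/2) ltac:(apply/andP; split; lra).
by have := m1 _ em; have := m1 _ e2; have := m2 _ e1; rewrite -/m; lra.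
Qed.

Lemma jdag_spec v : T v -> is_jdag S (conj phi) v (jdag S (conj phi) v).
Proof.
move=> /dtPsistar_onto [u <-]; apply: epsilon_spec.
by exists (g (mSt u)); apply: is_jdag_dtPsistar.
Qed.

Lemma jdag_dtPsistar u : jdag S (conj phi) (dtPsistar S g u) = g (mSt u).
Proof. exact: is_jdag_uniq (jdag_spec (ImS_dtPsistar u)) (is_jdag_dtPsistar u). Qed.

Lemma tPsi_dtPsistar u :
  tPsi S phi (dtPsistar S g u) = dotv (dtPsistar S g u) u - tPsistar S phi u.
Proof. by rewrite /tPsi jdag_dtPsistar conj_at_grad dotv_mSt. Qed.

Lemma tPsi_fenchel_young v u : T v ->
  dotv v u - tPsistar S phi u <= tPsi S phi v.
Proof.
move=> /jdag_spec [jv _]; have := fenchel_young (jdag S (conj phi) v) (mSt u).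
by rewrite dotv_mSt jv.
Qed.

Lemma jdag_unique v : T v -> exists j, is_jdag S (conj phi) v j /\
  forall j', is_jdag S (conj phi) v j' -> j' = j.
Proof.
move=> Tv; exists (jdag S (conj phi) v); split; first exact: jdag_spec.
by move=> j' j'v; apply: is_jdag_uniq j'v (jdag_spec Tv).
Qed.

Lemma tPsi_conj v : T v ->
  (exists u, tPsi S phi v = dotv v u - tPsistar S phi u) /\
  (forall u, dotv v u - tPsistar S phi u <= tPsi S phi v).
Proof.
move=> Tv; split => [|u]; last exact: tPsi_fenchel_young.
by have [u <-] := dtPsistar_onto Tv; exists u; apply: tPsi_dtPsistar.
Qed.

Lemma tPsistar_conj u :
  (exists v, T v /\ tPsistar S phi u = dotv v u - tPsi S phi v) /\
  (forall v, T v -> dotv v u - tPsi S phi v <= tPsistar S phi u).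
Proof.
split=> [|v Tv]; last by have := tPsi_fenchel_young u Tv; lra.
exists (dtPsistar S g u); split; first exact: ImS_dtPsistar.
by rewrite tPsi_dtPsistar; lra.
Qed.

Lemma is_dtPsi_dtPsistar u : is_dtPsi S phi (dtPsistar S g u) u.
Proof. by rewrite /is_dtPsi jdag_dtPsistar; apply: is_gradient_conj. Qed.

Lemma is_dtPsi_exists v : T v -> exists u, is_dtPsi S phi v u.
Proof. by move=> /dtPsistar_onto [u <-]; exists u; apply: is_dtPsi_dtPsistar. Qed.

Lemma is_dtPsi_equivT v u u' :
  is_dtPsi S phi v u -> is_dtPsi S phi v u' -> equivT S u u'.
Proof. by move=> vu vu'; apply/oppr_inj/(is_gradient_uniq vu vu'). Qed.

Lemma dtPsistar_is_dtPsi v u : T v -> is_dtPsi S phi v u -> dtPsistar S g u = v.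
Proof. by move=> Tv /grad_conj_inv vu; rewrite /dtPsistar vu; case: (jdag_spec Tv). Qed.

Lemma dtPsistar_gradient u : is_gradient (tPsistar S phi) u (dtPsistar S g u).
Proof.
move=> eps e0; have [del [del0 hdel]] := is_gradient_along (- A^T) (phi_grad (mSt u)) e0.
exists del; split => // h _ hd; have := hdel h hd.
by rewrite mulNmx -opprD -mulmxDr dotv_mSt.
Qed.

(* Lower bound by Fenchel-Young, upper bound by the competitor [J - pinvmx A h]
   of the minimization defining [tPsi (v + h)]. *)
Lemma is_dtPsi_gradient v u : T v -> is_dtPsi S phi v u ->
  is_gradient_on T (tPsi S phi) v u.
Proof.
move=> Tv vu eps e0; set J := jdag S (conj phi) v.
have [del [del0 hdel]] := is_gradient_along (- pinvmx A) vu e0.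
exists del; split => // h Th hd.
have [eJ _] := jdag_spec Tv; have Tvh := ImSD Tv Th.
have Bh : - (A *m (- pinvmx A *m h)) = h.
  case: Th => j <-; rewrite mulNmx mulmxN opprK.
  by rewrite (mulmxA A) (mulmxA (A *m _) A) mulmxKpV ?submx_refl.
have upper : tPsi S phi (v + h) <= conj phi (J + - pinvmx A *m h).
  by have [_ Jmin] := jdag_spec Tvh; apply: Jmin; rewrite mulmxDr opprD eJ Bh.
have lower := tPsi_fenchel_young u Tvh.
have tPv : tPsi S phi v = dotv v u - tPsistar S phi u.
  by rewrite -{1 2}(dtPsistar_is_dtPsi Tv vu) tPsi_dtPsistar.
have := hdel h hd; rewrite (dotvC (mSt u)) dotv_mSt Bh dotvC ler_norml.
move: lower; rewrite dotvDl (dotvC h u) => lower /andP[_ hi].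
have tPvJ : tPsi S phi v = conj phi J by [].
by rewrite ger0_norm; lra.
Qed.

Lemma tPsi_strictly_convex : strictly_convex_mod T (@eq _) (tPsi S phi).
Proof.
move=> a b Ta Tb ab t /andP[t0 t1].
have [ea _] := jdag_spec Ta; have [eb _] := jdag_spec Tb.
set ja := jdag S (conj phi) a in ea *; set jb := jdag S (conj phi) b in eb *.
have jab : ja != jb by apply/eqP => jab; apply: ab; rewrite -ea -eb jab.
set w := t *: a + (1 - t) *: b.
have em : - (A *m (t *: ja + (1 - t) *: jb)) = w.
  by rewrite opp_mulmx_comb ea eb.
have [_ wmin] := jdag_spec (ImSD (ImSZ t Ta) (ImSZ (1 - t) Tb)).
have := wmin _ em; have := conj_strictly_convex jab (t := t) ltac:(apply/andP; split; lra).
by rewrite /tPsi -/ja -/jb; lra.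
Qed.

Lemma tPsi_coercive : coercive_on T (@normv R NX) (tPsi S phi).
Proof.
move=> M; set c := mx_abs_sum A + 1.
have c0 : 0 < c by rewrite ltr_wpDl ?mx_abs_sum_ge0.
have cM0 : 0 <= c * (`|M| + 1) by apply: mulr_ge0; [exact: ltW | rewrite addr_ge0].
have [K [K0 lowK]] := conj_lower_bound cM0.
exists K => v Tv Kv; have [eJ _] := jdag_spec Tv.
set J := jdag S (conj phi) v in eJ *.
have vJ : normv v <= c * normv J.
  rewrite -eJ normvN; apply: le_trans (normv_mulmx _ _) _.
  by rewrite ler_wpM2r ?normv_ge0 // lerDl.
have := lowK J; have := ler_norm M; have := normr_ge0 M.
by rewrite ltr_pdivlMr ?(le_lt_trans K0) // /tPsi -/J; nra.
Qed.

Lemma tPsiN v : T v -> tPsi S phi (- v) = tPsi S phi v.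
Proof.
suff le_tPsiN w : T w -> tPsi S phi (- w) <= tPsi S phi w.
  move=> Tv; apply/eqP; rewrite eq_le; apply/andP; split; first exact: le_tPsiN.
  by have := le_tPsiN _ (ImSN Tv); rewrite opprK.
move=> Tw; have [ew _] := jdag_spec Tw; have [_ wmin] := jdag_spec (ImSN Tw).
set J := jdag S (conj phi) w in ew *.
apply: le_trans (wmin (- J) _) _; first by rewrite -ew mulmxN.
by rewrite conjN.
Qed.

Lemma tPsi0 : tPsi S phi 0 = 0.
Proof.
have [_ min0] := jdag_spec (ImSZ 0 (ImS_dtPsistar 0)); rewrite scale0r in min0.
apply/eqP; rewrite eq_le conj_ge0 andbT -[X in _ <= X]conj0.
by apply: min0; rewrite mulmx0 oppr0.
Qed.

(* Compare with the representative [pinvmx S^T (S^T u)] of the class of [u]. *)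
Lemma qnorm_le u : qnorm S u <= mx_abs_sum (pinvmx A^T) * normv (A^T *m u).
Proof.
apply: le_trans (normv_mulmx _ _); apply: ge_inf.
  by exists 0 => _ [k [_ ->]]; apply: normv_ge0.
exists (pinvmx A^T *m (A^T *m u) - u); split; last by rewrite addrC subrK.
by rewrite mulmxBr (mulmxA A^T) (mulmxA (A^T *m _) A^T) mulmxKpV ?submx_refl // subrr.
Qed.

Lemma tPsistar_strictly_convex : strictly_convex_mod setT (equivT S) (tPsistar S phi).
Proof.
move=> a b _ _ ab t t01; rewrite /tPsistar.
have -> : mSt (t *: a + (1 - t) *: b) = t *: mSt a + (1 - t) *: mSt b.
  by rewrite mulmxDr -!scalemxAr; vec_ring.
by apply: phi_sconvex => // ab'; apply/ab/oppr_inj.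
Qed.

Lemma tPsistar_coercive : coercive_on setT (qnorm S) (tPsistar S phi).
Proof.
move=> M; set c := mx_abs_sum (pinvmx A^T) + 1.
have c0 : 0 < c by rewrite ltr_wpDl ?mx_abs_sum_ge0.
have [r rphi] := phi_coercive (c * `|M|).
have r'0 : 0 <= Num.max r 0 by rewrite le_max lexx orbT.
exists (c * Num.max r 0) => u _ ru.
set q := qnorm S u in ru *; set N := normv (mSt u).
have qN : q <= c * N.
  apply: le_trans (qnorm_le u) _; rewrite -normvN ler_wpM2r ?normv_ge0 //.
  by rewrite lerDl.
have q0 : 0 < q := le_lt_trans (mulr_ge0 (ltW c0) r'0) ru.
have : Num.max r 0 < N by rewrite -(ltr_pM2l c0); lra.
rewrite gt_max => /andP[rN N0].
have := rphi _ I rN; rewrite ltr_pdivlMr // -/N => phiN'.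
have := ler_norm M; have := normr_ge0 M.
by rewrite ltr_pdivlMr // /tPsistar; nra.
Qed.

Lemma tPsistarN u : tPsistar S phi (- u) = tPsistar S phi u.
Proof. by rewrite /tPsistar mulmxN opprK -[RHS]phiN opprK. Qed.

Lemma tPsistar0 : tPsistar S phi 0 = 0.
Proof. by rewrite /tPsistar mulmx0 oppr0 phi0. Qed.

End Reduction.
End Dissipation.

Theorem mainTheorem8 (R : realType) (NX Ne : nat) (S : 'M[int]_(NX, Ne))
  (Psistar : 'cV[R]_NX -> 'cV[R]_Ne -> R)
  (gradPsistar : 'cV[R]_NX -> 'cV[R]_Ne -> 'cV[R]_Ne)
  (Hdiss : forall x : 'cV[R]_NX, (forall i, 0 < x i 0) -> dissipation (Psistar x))
  (Hgrad : forall x : 'cV[R]_NX, (forall i, 0 < x i 0) ->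
     forall f, is_gradient (Psistar x) f (gradPsistar x f))
  (x : 'cV[R]_NX) (Hx : forall i, 0 < x i 0) :
  let T := @ImS R _ _ S in
  let Psi := conj (Psistar x) in
  let tP := tPsi S (Psistar x) in
  let tPs := tPsistar S (Psistar x) in
  let dtPs := dtPsistar S (gradPsistar x) in
  let dtP := is_dtPsi S (Psistar x) in
  (* j^dagger(x,v) is well defined: unique minimizer *)
      (forall v, T v -> exists j, is_jdag S Psi v j /\
          forall j', is_jdag S Psi v j' -> j' = j) /\
      (* tilde Psi_x (v) = max_u [<v,u> - tilde Psi*_x (u)] *)
      (forall v, T v ->
          (exists u, tP v = dotv v u - tPs u) /\
          (forall u, dotv v u - tPs u <= tP v)) /\
      (* tilde Psi*_x (u) = max_{v in T} [<v,u> - tilde Psi_x (v)] *)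
      (forall u,
          (exists v, T v /\ tPs u = dotv v u - tP v) /\
          (forall v, T v -> dotv v u - tP v <= tPs u)) /\
      (* Legendre transformations: well defined, gradients, mutually inverse *)
      ([/\ (forall v, T v -> exists u, dtP v u),
          (forall v u u', T v -> dtP v u -> dtP v u' -> equivT S u u'),
          (forall v u, T v -> dtP v u -> is_gradient_on T tP v u)
        & (forall u, T (dtPs u) /\ is_gradient tPs u (dtPs u))] /\
       (forall v u, T v -> dtP v u -> dtPs u = v)
         /\ (forall u, dtP (dtPs u) u)) /\
      (* tilde Psi_x is a dissipation function on T *)
      [/\ strictly_convex_mod T (@eq _) tP,
          coercive_on T (@normv R NX) tP,
          (forall v, T v -> tP (- v) = tP v)
        & tP 0 = 0] /\ (* tilde Psi*_x is a dissipation function on R^NX / Ker S^T *)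
      [/\ strictly_convex_mod setT (equivT S) tPs,
          coercive_on setT (qnorm S) tPs,
          (forall u, tPs (- u) = tPs u)
        & tPs 0 = 0].
Proof.
move=> T Psi tP tPs dtPs dtP.
have [Hsc _ Hcoer Hev H0] := Hdiss x Hx; have Hg := Hgrad x Hx.
split; first by move=> v; apply: jdag_unique.
split; first by move=> v; apply: tPsi_conj.
split; first by move=> u; apply: tPsistar_conj.
split.
  split; [split | split].
  - by move=> v; apply: is_dtPsi_exists.
  - by move=> v u u' _; apply: is_dtPsi_equivT.
  - by move=> v u; apply: is_dtPsi_gradient.
  - by move=> u; split; [apply: ImS_dtPsistar | apply: dtPsistar_gradient].
  - by move=> v u; apply: dtPsistar_is_dtPsi.
  - by move=> u; apply: is_dtPsi_dtPsistar.
split; split.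
- exact: tPsi_strictly_convex.
- exact: tPsi_coercive.
- by move=> v; apply: tPsiN.
- exact: tPsi0.
- exact: tPsistar_strictly_convex.
- exact: tPsistar_coercive.
- exact: tPsistarN.
- exact: tPsistar0.
Qed.
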